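(* Let $N=k_1 b_1=k_2 b_2$ with positive integers $k_1,b_1,k_2,b_2$. Let $\mathcal{B}_1\cong\mathrm{O}(b_1)^{k_1}$ be the group of $N\times N$ block-diagonal matrices with $k_1$ orthogonal diagonal blocks of size $b_1\times b_1$, and $\mathcal{B}_2\cong \mathrm{O}(b_2)^{k_2}$ the group of $N\times N$ block-diagonal matrices with $k_2$ orthogonal diagonal blocks of size $b_2\times b_2$; let $G=\mathcal{B}_2\times\mathcal{B}_1$. Let $P_1$ be the $N\times N$ perfect shuffle permutation matrix defined by $P_1(e_a\otimes e_c)=e_c\otimes e_a$ for all standard basis vectors $e_a\in\mathbb{R}^{k_1}$, $e_c\in\mathbb{R}^{b_1}$ (so that $P_1(X\otimes Y)P_1^\top=Y\otimes X$ for all $X\in\mathbb{R}^{k_1\times k_1}$, $Y\in\mathbb{R}^{b_1\times b_1}$). Consider the stabilizer $$\operatorname{Stab}_G(P_1)=\{(B_2,B_1)\in G : B_2 P_1 B_1^\top = P_1\}.$$ If $k_1\ge b_2$, then every $(B_2,B_1)\in\operatorname{Stab}_G(P_1)$ has $B_2$ diagonal with diagonal entries in $\{\pm1\}$ (and $B_1=P_1^\top B_2 P_1$); in particular $\operatorname{Stab}_G(P_1)$ is a finite, hence discrete, subgroup of $G$. The same conclusion holds when all orthogonal blocks are required to lie in the special orthogonal groups $\mathrm{SO}(b_1)$, $\mathrm{SO}(b_2)$.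
   Context: The block-diagonal matrices in $\mathcal{B}_1$ have the form $\sum_{a=1}^{k_1} E_{aa}\otimes M_a$ with $E_{aa}$ the $k_1\times k_1$ matrix unit and $M_a\in\mathrm{O}(b_1)$. $\mathrm{SO}(m)$ denotes orthogonal $m\times m$ matrices of determinant $1$. *)

From HB Require Import structures.
From mathcomp Require Import all_boot all_order all_algebra.
From mathcomp Require Import reals.
From mathcomp Require Import zify.
Set Implicit Arguments. Unset Strict Implicit. Unset Printing Implicit Defensive.
Import Order.TTheory GRing.Theory Num.Theory.
Local Open Scope ring_scope.

(* Kronecker index: e_a (x) e_c in R^k (x) R^b is the standard basis vector
   with index a * b + c in R^(k*b). *)
Lemma kidx_proof (k b : nat) (a : 'I_k) (c : 'I_b) : (a * b + c < k * b)%N.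
Proof.
case: a c => a Ha [c Hc] /=.
have : (a.+1 * b <= k * b)%N by rewrite leq_mul2r Ha orbT.
rewrite mulSn => H; lia.
Qed.

Definition kidx (k b : nat) (a : 'I_k) (c : 'I_b) : 'I_(k * b) :=
  Ordinal (kidx_proof a c).

(* A matrix B : 'M_N (with e : k * b = N) lies in the block-diagonal group
   O(b)^k (or SO(b)^k when SO = true): B = sum_a E_aa (x) M_a, M_a orthogonal. *)
Definition block_orth (R : realType) (k b N : nat) (e : (k * b)%N = N)
    (SO : bool) (B : 'M[R]_N) : Prop :=
  exists M : 'I_k -> 'M[R]_b,
    (forall a, M a *m (M a)^T = 1%:M /\ (SO -> \det (M a) = 1)) /\
    (forall (a a' : 'I_k) (c c' : 'I_b),
        B (cast_ord e (kidx a c)) (cast_ord e (kidx a' c')) =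
        if a == a' then M a c c' else 0).

(* Perfect shuffle P : 'M_(k*b), P (e_a (x) e_c) = e_c (x) e_a. *)
Definition shuffle (R : realType) (k b : nat) : 'M[R]_(k * b) :=
  \matrix_(i, j)
    ([exists a : 'I_k, exists c : 'I_b,
        (i == cast_ord (mulnC b k) (kidx c a)) && (j == kidx a c)])%:R.

Definition in_stab (R : realType) (k1 b1 k2 b2 : nat)
    (eN : (k2 * b2)%N = (k1 * b1)%N) (SO : bool)
    (B2 B1 : 'M[R]_(k1 * b1)) : Prop :=
  [/\ @block_orth R k2 b2 _ eN SO B2, @block_orth R k1 b1 _ (erefl (k1 * b1)%N) SO B1 &
      B2 *m shuffle R k1 b1 *m B1^T = shuffle R k1 b1].

From mathcomp Require Import all_boot all_order all_algebra all_fingroup.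
From mathcomp Require Import reals zify.
Set Implicit Arguments. Unset Strict Implicit. Unset Printing Implicit Defensive.
Import Order.TTheory GRing.Theory Num.Theory.
Local Open Scope ring_scope.

(* Since B1 = P^T B2 P, the matrix B2 is block diagonal twice over: for the
   blocks of b2 consecutive indices (same quotient by b2), and, through the
   shuffle, for the classes of indices with the same residue modulo k1. Two
   distinct indices in the same block and the same class differ by a positive
   multiple of k1 that is smaller than b2 <= k1, which is impossible; so B2 is
   diagonal, and being orthogonal its diagonal entries are 1 or -1. There are
   finitely many such matrices, and B2 determines B1. *)

Section KroneckerIndex.
Variables k b : nat.

Lemma ord_mul_gt0 (u : 'I_(k * b)) : (0 < k)%N /\ (0 < b)%N.
Proof. by apply/andP; rewrite -muln_gt0 (leq_ltn_trans _ (ltn_ord u)). Qed.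

Lemma ltn_ord_divn (u : 'I_(k * b)) : (u %/ b < k)%N.
Proof. by rewrite ltn_divLR ?ltn_ord //; case: (ord_mul_gt0 u). Qed.

Lemma ltn_ord_modn (u : 'I_(k * b)) : (u %% b < b)%N.
Proof. by rewrite ltn_mod; case: (ord_mul_gt0 u). Qed.

Definition kdiv (u : 'I_(k * b)) : 'I_k := Ordinal (ltn_ord_divn u).
Definition kmod (u : 'I_(k * b)) : 'I_b := Ordinal (ltn_ord_modn u).

Lemma kdiv_kidx (a : 'I_k) (c : 'I_b) : kdiv (kidx a c) = a.
Proof.
have hb : (0 < b)%N := leq_ltn_trans (leq0n c) (ltn_ord c).
by apply: val_inj; rewrite /= divnMDl // divn_small // addn0.
Qed.

Lemma kmod_kidx (a : 'I_k) (c : 'I_b) : kmod (kidx a c) = c.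
Proof. by apply: val_inj; rewrite /= modnMDl modn_small. Qed.

Lemma kidxK u : kidx (kdiv u) (kmod u) = u.
Proof. by apply: val_inj; rewrite /= -divn_eq. Qed.

Lemma kidx_eq (a a' : 'I_k) (c c' : 'I_b) :
  (kidx a c == kidx a' c') = (a == a') && (c == c').
Proof.
apply/eqP/andP => [E | [/eqP-> /eqP->] //]; split; apply/eqP.
  by rewrite -(kdiv_kidx a c) E kdiv_kidx.
by rewrite -(kmod_kidx a c) E kmod_kidx.
Qed.

Lemma kidx_bij : {on 'I_(k * b), bijective (fun p : 'I_k * 'I_b => kidx p.1 p.2)}.
Proof.
apply: onW_bij; exists (fun u => (kdiv u, kmod u)) => [[a c] | u] /=.
  by rewrite kdiv_kidx kmod_kidx.
exact: kidxK.
Qed.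

Lemma sum_kidx (V : nmodType) (F : 'I_(k * b) -> V) :
  \sum_(u < k * b) F u = \sum_(a < k) \sum_(c < b) F (kidx a c).
Proof. by rewrite pair_bigA (reindex _ kidx_bij). Qed.

End KroneckerIndex.

Section BlockOrthogonal.
Variables (R : realType) (k b N : nat) (e : (k * b)%N = N) (SO : bool).

Lemma block_orth_offblock (B : 'M[R]_N) (u v : 'I_N) :
  block_orth e SO B -> (u %/ b != v %/ b)%N -> B u v = 0.
Proof.
case: N / e B u v => B u v [M [_ hB]] neq_uv.
have {}neq_uv : kdiv u != kdiv v by [].
rewrite -(kidxK u) -(kidxK v) -[kidx _ _]cast_ord_id -[X in B _ X]cast_ord_id.
by rewrite hB ifN.
Qed.

Lemma block_orth_mulmx_tr (B : 'M[R]_N) : block_orth e SO B -> B *m B^T = 1%:M.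
Proof.
case: N / e B => B [M [hM hB]].
have {}hB a a' c c' : B (kidx a c) (kidx a' c') = if a == a' then M a c c' else 0.
  by rewrite -hB !cast_ord_id.
apply/matrixP => u v; rewrite -(kidxK u) -(kidxK v).
move: (kdiv u) (kmod u) (kdiv v) (kmod v) => a c a' c'.
rewrite !mxE sum_kidx kidx_eq.
under eq_bigr => x _ do under eq_bigr => y _ do rewrite mxE !hB.
rewrite (bigD1 a) //= [X in _ + X]big1 ?addr0 => [|x /negbTE xa]; last first.
  by rewrite big1 // => y _; rewrite eq_sym xa mul0r.
under eq_bigr do rewrite eqxx.
have [<- | ne] := eqVneq a a'; last first.
  by rewrite big1 // => y _; rewrite mulr0.
have := congr1 (fun A : 'M[R]_b => A c c') (proj1 (hM a)); rewrite !mxE => <-.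
by apply: eq_bigr => y _; rewrite mxE.
Qed.

End BlockOrthogonal.

Lemma conj_perm_mxE (R : pzRingType) n (s : 'S_n) (A : 'M[R]_n) i j :
  (perm_mx s *m A *m (perm_mx s)^T) i j = A (s i) (s j).
Proof. by rewrite tr_perm_mx -row_permE -col_permE !mxE. Qed.

Section Shuffle.
Variables k b : nat.

Definition shuffle_fun (u : 'I_(k * b)) : 'I_(k * b) :=
  let v := cast_ord (mulnC k b) u in kidx (kmod v) (kdiv v).

Lemma shuffle_fun_inj : injective shuffle_fun.
Proof.
move=> u u' /eqP; rewrite kidx_eq => /andP [/eqP eq_mod /eqP eq_div].
apply: (cast_ord_inj (eq_n := mulnC k b)).
by rewrite -[LHS]kidxK eq_mod eq_div kidxK.
Qed.

Definition shuffle_perm : 'S_(k * b) := perm shuffle_fun_inj.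

Lemma shuffle_perm_divn u : (shuffle_perm u %/ b = u %% k)%N.
Proof.
rewrite permE; change (val (kdiv (shuffle_fun u)) = u %% k)%N.
by rewrite kdiv_kidx.
Qed.

Lemma shuffle_perm_mx (R : realType) : shuffle R k b = perm_mx shuffle_perm.
Proof.
apply/matrixP => i j; rewrite !mxE permE; congr (nat_of_bool _)%:R.
apply/existsP/eqP => [[a /existsP [c /andP [/eqP -> /eqP ->]]] | <-].
  rewrite /shuffle_fun.
  have -> : cast_ord (mulnC k b) (cast_ord (mulnC b k) (kidx c a)) = kidx c a.
    exact: val_inj.
  by rewrite kdiv_kidx kmod_kidx.
set v := cast_ord (mulnC k b) i.
exists (kmod v); apply/existsP; exists (kdiv v); rewrite eqxx andbT.
by apply/eqP/val_inj; rewrite /= -divn_eq.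
Qed.

End Shuffle.

Lemma eq_divn_modn (b k u v : nat) : (0 < b)%N -> (b <= k)%N ->
  (u %/ b = v %/ b)%N -> (u %% k = v %% k)%N -> u = v.
Proof.
move=> hb hbk; wlog le_uv : u v / (u <= v)%N.
  move=> wlog_uv eq_div eq_mod; have [le_uv|/ltnW le_vu] := leqP u v.
    exact: wlog_uv.
  exact/esym/wlog_uv.
move=> eq_div eq_mod.
have lt_b : (v - u < b)%N.
  have := divn_eq u b; have := divn_eq v b.
  have := ltn_pmod u hb; have := ltn_pmod v hb; rewrite eq_div; lia.
have : (k %| v - u)%N by rewrite -eqn_mod_dvd // eq_mod.
case: (posnP (v - u)) => [? _|pos /(dvdn_leq pos)]; lia.
Qed.

Lemma diag_mx_orth_sign (R : idomainType) n (D : 'M[R]_n) :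
  is_diag_mx D -> D *m D^T = 1%:M -> forall i, D i i = 1 \/ D i i = -1.
Proof.
move=> /is_diag_mxP D0 DDt i; apply/pred2P; rewrite -sqrf_eq1 expr2.
have := congr1 (fun A : 'M[R]_n => A i i) DDt.
rewrite !mxE eqxx (bigD1 i) //= big1 ?addr0.
  by rewrite mxE => ->.
by move=> j ji; rewrite mxE D0 ?mul0r // eq_sym.
Qed.

Lemma sign_diag_mx_finite (R : pzRingType) n : exists s : seq 'M[R]_n,
  forall D, is_diag_mx D -> (forall i, D i i = 1 \/ D i i = -1) -> D \in s.
Proof.
pose sgn (f : {ffun 'I_n -> bool}) :=
  diag_mx (\row_i (if f i then 1 else -1) : 'rV[R]_n).
exists [seq sgn f | f <- enum {ffun 'I_n -> bool}] => D /is_diag_mxP D0 Dsg.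
apply/mapP; exists [ffun i => D i i == 1]; first by rewrite mem_enum.
apply/matrixP => i j; rewrite !mxE ffunE.
have [<- | ne] := eqVneq i j; last by rewrite (D0 _ _ ne).
by case: (Dsg i) => ->; rewrite ?eqxx //; case: eqP.
Qed.

Lemma shuffle_conj_is_diag (R : realType) (k1 b1 k2 b2 : nat)
    (eN : (k2 * b2)%N = (k1 * b1)%N) (SO : bool) (B2 B1 : 'M[R]_(k1 * b1)) :
  (b2 <= k1)%N -> block_orth eN SO B2 -> block_orth (erefl (k1 * b1)%N) SO B1 ->
  B2 = perm_mx (shuffle_perm k1 b1) *m B1 *m (perm_mx (shuffle_perm k1 b1))^T ->
  is_diag_mx B2.
Proof.
move=> le_b2k1 orthB2 orthB1 eB2; apply/is_diag_mxP => u v neq_uv.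
have [eq_div|neq_div] := eqVneq (u %/ b2)%N (v %/ b2)%N; last first.
  exact: block_orth_offblock orthB2 neq_div.
rewrite eB2 conj_perm_mxE; apply: (block_orth_offblock orthB1).
rewrite !shuffle_perm_divn; apply: contra neq_uv => /eqP eq_mod; apply/eqP.
have hb2 : (0 < b2)%N by case: (ord_mul_gt0 (cast_ord (esym eN) u)).
exact: eq_divn_modn hb2 le_b2k1 eq_div eq_mod.
Qed.

Lemma stab_shuffle_sign_diag (R : realType) (k1 b1 k2 b2 : nat)
    (eN : (k2 * b2)%N = (k1 * b1)%N) (SO : bool) (B2 B1 : 'M[R]_(k1 * b1)) :
  (b2 <= k1)%N -> in_stab eN SO B2 B1 ->
  [/\ is_diag_mx B2, (forall i, B2 i i = 1 \/ B2 i i = -1) &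
      B1 = (shuffle R k1 b1)^T *m B2 *m shuffle R k1 b1].
Proof.
move=> le_b2k1 [orthB2 orthB1 stab].
set P := shuffle R k1 b1 in stab *.
have eP : P = perm_mx (shuffle_perm k1 b1) := shuffle_perm_mx _ _ _.
have PtP : P^T *m P = 1%:M by rewrite eP tr_perm_mx -perm_mxM mulVg perm_mx1.
have B2P : B2 *m P = P *m B1.
  by rewrite -[in RHS]stab -!mulmxA (mulmx1C (block_orth_mulmx_tr orthB1)) mulmx1.
have diagB2 : is_diag_mx B2.
  apply: shuffle_conj_is_diag le_b2k1 orthB2 orthB1 _.
  by rewrite -eP -B2P -mulmxA (mulmx1C PtP) mulmx1.
split=> //; first exact: diag_mx_orth_sign diagB2 (block_orth_mulmx_tr orthB2).
by rewrite -mulmxA B2P mulmxA PtP mul1mx.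
Qed.

Theorem mainTheorem3 (R : realType) (k1 b1 k2 b2 : nat)
    (hk1 : (0 < k1)%N) (hb1 : (0 < b1)%N) (hk2 : (0 < k2)%N) (hb2 : (0 < b2)%N)
    (eN : (k2 * b2)%N = (k1 * b1)%N) (hkb : (b2 <= k1)%N) (SO : bool) :
  (forall B2 B1 : 'M[R]_(k1 * b1), in_stab eN SO B2 B1 ->
      [/\ is_diag_mx B2,
          (forall i, B2 i i = 1 \/ B2 i i = -1) &
          B1 = (shuffle R k1 b1)^T *m B2 *m shuffle R k1 b1]) /\
  (exists s : seq ('M[R]_(k1 * b1) * 'M[R]_(k1 * b1)),
      forall B2 B1 : 'M[R]_(k1 * b1), in_stab eN SO B2 B1 -> (B2, B1) \in s).
Proof.
split=> [B2 B1|]; first exact: stab_shuffle_sign_diag.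
have [s sP] := sign_diag_mx_finite R (k1 * b1).
exists [seq (D, (shuffle R k1 b1)^T *m D *m shuffle R k1 b1) | D <- s] => B2 B1.
case/(stab_shuffle_sign_diag hkb) => diagB2 signB2 ->.
by apply: map_f; apply: sP.
Qed.
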